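(* Let $\mathcal{A}$ be a topological ring containing $\mathbb{Q}$, let $\mathcal{B}$ be a complete topological $\mathcal{A}$-algebra and let $\partial$ be a topologically integrable $\mathcal{A}$-derivation of $\mathcal{B}$. Then: (a) For every $f\in\operatorname{Ker}(\partial)$, the $\mathcal{A}$-derivation $f\partial$ of $\mathcal{B}$ is topologically integrable. (b) For every multiplicatively closed subset $S$ of $\operatorname{Ker}(\partial)$, the induced $\mathcal{A}$-derivation $\widehat{S^{-1}\partial}$ of $\widehat{S^{-1}\mathcal{B}}$ is topologically integrable. (c) For every surjective open homomorphism of complete topological rings $\pi\colon\mathcal{B}\to\mathcal{C}$ such that $\partial(\operatorname{Ker}\pi)\subseteq\operatorname{Ker}\pi$, the induced $\mathcal{A}$-derivation $\overline{\partial}$ of $\mathcal{C}\cong\mathcal{B}/\operatorname{Ker}\pi$ is topologically integrable. (d) For every topologically integrable $\mathcal{A}$-derivation $\partial'$ of $\mathcal{B}$ such that $\partial\circ\partial'=\partial'\circ\partial$, the $\mathcal{A}$-derivation $\partial+\partial'$ of $\mathcal{B}$ is topologically integrable.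
   Context: Conventions: topological rings are linearly topologized with a countable fundamental system of open ideals; homomorphisms are continuous; complete means the canonical map to $\varprojlim_{\mathfrak{a}}\mathcal{B}/\mathfrak{a}$ (open ideals, discrete quotients) is a topological isomorphism; a complete topological $\mathcal{A}$-algebra is a complete topological ring with a continuous homomorphism from $\mathcal{A}$. A continuous $\mathcal{A}$-derivation $\partial\colon\mathcal{B}\to\mathcal{B}$ is a continuous $\mathcal{A}$-linear map satisfying the Leibniz rule; it is topologically integrable if the sequence of iterates $(\partial^i)_{i\in\mathbb{N}}$ converges continuously to $0$: for every $b\in\mathcal{B}$ and every open ideal $\mathfrak{b}'$ there exist an open ideal $\mathfrak{b}$ and $n_0$ with $\partial^n(b+\mathfrak{b})\subseteq\mathfrak{b}'$ for all $n\ge n_0$. For a multiplicatively closed $S\subseteq\mathcal{B}$, $\widehat{S^{-1}\mathcal{B}}$ is the separated completion of $S^{-1}\mathcal{B}$ for the linear topology generated by the ideals $S^{-1}\mathfrak{b}$, $\mathfrak{b}$ open, with canonical map $\tilde j\colon\mathcal{B}\to\widehat{S^{-1}\mathcal{B}}$, and $\widehat{S^{-1}\partial}$ is the continuous derivation of $\widehat{S^{-1}\mathcal{B}}$ induced by $\partial$ (satisfying $\widehat{S^{-1}\partial}\circ\tilde j=\tilde j\circ\partial$). In (c), $\overline{\partial}$ is the derivation with $\overline{\partial}\circ\pi=\pi\circ\partial$. *)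

From HB Require Import structures.
From mathcomp Require Import all_boot all_order all_algebra.
Set Implicit Arguments. Unset Strict Implicit. Unset Printing Implicit Defensive.
Import GRing.Theory.
Local Open Scope ring_scope.

Definition is_ideal (R : comPzRingType) (U : R -> Prop) : Prop :=
  [/\ U 0, (forall x y, U x -> U y -> U (x + y)) & (forall r x, U x -> U (r * x))].

(* a linear topology with a countable fundamental system of open ideals
   (normalized to be decreasing, which is no loss of generality) *)
Record lintop (R : comPzRingType) := Lintop {
  fsys : nat -> R -> Prop;
  fsys_ideal : forall n, is_ideal (fsys n);
  fsys_decr : forall n x, fsys n.+1 x -> fsys n x }.

Definition open_ideal (R : comPzRingType) (T : lintop R) (U : R -> Prop) : Prop :=
  is_ideal U /\ exists n, forall x, fsys T n x -> U x.

(* continuity of an additive map: preimage of every open ideal is open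
   (for an additive map this is continuity) *)
Definition hom_continuous (R1 R2 : comPzRingType) (T1 : lintop R1) (T2 : lintop R2)
  (f : R1 -> R2) : Prop :=
  forall U, open_ideal T2 U -> exists n, forall x, fsys T1 n x -> U (f x).

(* openness of a surjective additive map: the image of every open ideal
   contains (hence, being a subgroup, is) an open neighbourhood of 0 *)
Definition hom_open (R1 R2 : comPzRingType) (T1 : lintop R1) (T2 : lintop R2)
  (f : R1 -> R2) : Prop :=
  forall U, open_ideal T1 U ->
    exists n, forall c, fsys T2 n c -> exists b, U b /\ f b = c.

(* completeness: the canonical map R -> lim_n R/a_n is bijective
   (it is then automatically a topological isomorphism) *)
Definition complete (R : comPzRingType) (T : lintop R) : Prop :=
  (forall x, (forall n, fsys T n x) -> x = 0) /\
  (forall x : nat -> R, (forall n, fsys T n (x n.+1 - x n)) ->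
     exists b, forall n, fsys T n (b - x n)).

Definition derivation (A R : comPzRingType) (phi : A -> R) (T : lintop R)
  (d : R -> R) : Prop :=
  [/\ (forall x y, d (x + y) = d x + d y),
      (forall x y, d (x * y) = d x * y + x * d y),
      (forall a x, d (phi a * x) = phi a * d x)
    & hom_continuous T T d].

(* topological integrability: the iterates converge continuously to 0 *)
Definition top_integrable (R : comPzRingType) (T : lintop R) (d : R -> R) : Prop :=
  forall b U', open_ideal T U' ->
    exists U n0, open_ideal T U /\
      forall n x, (n0 <= n)%N -> U x -> U' (iter n d (b + x)).

Definition mult_closed (R : comPzRingType) (S : R -> Prop) : Prop :=
  S 1 /\ forall x y, S x -> S y -> S (x * y).

(* (D, TD, j) is the separated completion of S^{-1}R for the topology
   generated by the S^{-1} a_n:  D is complete, j(S) consists of units,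
   the fundamental system of D pulls back along S^{-1}R -> D, b/s |-> j b / j s,
   exactly to the ideals S^{-1} a_n  (b/s in S^{-1}a_n iff t b in a_n for
   some t in S), and the image of S^{-1}R is dense. *)
Definition loc_completion (R : comPzRingType) (T : lintop R) (S : R -> Prop)
  (D : comPzRingType) (TD : lintop D) (j : R -> D) : Prop :=
  [/\ complete TD,
      (forall s, S s -> exists u, j s * u = 1),
      (forall n b s u, S s -> j s * u = 1 ->
         (fsys TD n (j b * u) <-> exists t, S t /\ fsys T n (t * b)))
    & (forall y n, exists b s u, [/\ S s, j s * u = 1 & fsys TD n (y - j b * u)])].

(* For an additive continuous endomorphism d, topological integrability
   amounts to two properties of the iterates: they are equicontinuous at 0,
   and they converge pointwise to 0 (the finitely many iterates below the
   threshold are handled by continuity).  Each construction preserves both.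
   (a) (f d)^k = f^k d^k since f^k is a constant of d.  (b) On fractions,
   d^k (b/s) = d^k(b)/s; density of S^{-1}B and the description of the open
   ideals of S^{-1}B as the S^{-1} a_n transfer both properties.  (c) Iterates
   commute with the surjection pi, and openness of pi transfers
   equicontinuity.  (d) Since d and d' commute, (d + d')^n is a sum of terms
   d^k d'^l with k + l = n: those with l large are small by equicontinuity of
   d, the finitely many with l small by pointwise convergence of d. *)
From HB Require Import structures.
From mathcomp Require Import all_boot all_order all_algebra.
From mathcomp Require Import zify.
Set Implicit Arguments. Unset Strict Implicit. Unset Printing Implicit Defensive.
Import GRing.Theory.
Local Open Scope ring_scope.

Section FundamentalSystem.
Variables (R : comPzRingType) (T : lintop R).

Lemma fsysD n x y : fsys T n x -> fsys T n y -> fsys T n (x + y).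
Proof. by case: (fsys_ideal T n) => _ fD _; apply: fD. Qed.

Lemma fsysM n r x : fsys T n x -> fsys T n (r * x).
Proof. by case: (fsys_ideal T n) => _ _ fM; apply: fM. Qed.

Lemma fsysB n x y : fsys T n x -> fsys T n y -> fsys T n (x - y).
Proof. by move=> hx hy; apply: fsysD => //; rewrite -mulN1r; apply: fsysM. Qed.

Lemma fsys_le m n x : (m <= n)%N -> fsys T n x -> fsys T m x.
Proof.
move=> /subnK <-; elim: (n - m)%N => [|k IH]; first by rewrite add0n.
by rewrite addSn => /fsys_decr; apply: IH.
Qed.

Lemma open_fsys n : open_ideal T (fsys T n).
Proof. by split; [exact: fsys_ideal | exists n]. Qed.

End FundamentalSystem.

Lemma eventually_forall_lt (P : nat -> nat -> Prop) :
    (forall l, exists K, forall k, (K <= k)%N -> P l k) ->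
  forall M, exists K, forall l k, (l < M)%N -> (K <= k)%N -> P l k.
Proof.
move=> evP; elim=> [|M [K IH]]; first by exists 0%N.
have [K' hK'] := evP M; exists (maxn K K') => l k.
rewrite ltnS leq_eqVlt => /orP [/eqP -> | lM] Kk.
- by apply: hK'; exact: leq_trans (leq_maxr _ _) Kk.
- by apply: IH => //; exact: leq_trans (leq_maxl _ _) Kk.
Qed.

Section Leibniz.
Variables (R : comPzRingType) (d : R -> R).
Hypothesis dM : forall x y, d (x * y) = d x * y + x * d y.

Lemma derivation1 : d 1 = 0.
Proof.
have := dM 1 1; rewrite !(mulr1, mul1r) => d11.
by apply: (addrI (d 1)); rewrite addr0 -d11.
Qed.

Lemma derivation_mulkerl c y : d c = 0 -> d (c * y) = c * d y.
Proof. by move=> dc; rewrite dM dc mul0r add0r. Qed.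

Lemma iter_mulkerl k c y : d c = 0 -> iter k d (c * y) = c * iter k d y.
Proof.
by move=> dc; elim: k => [|k IH] //=; rewrite IH derivation_mulkerl.
Qed.

Lemma derivation_expker c k : d c = 0 -> d (c ^+ k) = 0.
Proof.
move=> dc; elim: k => [|k IH]; first by rewrite expr0 derivation1.
by rewrite exprS derivation_mulkerl // IH mulr0.
Qed.

Lemma derivation_invker c u : d c = 0 -> c * u = 1 -> d u = 0.
Proof.
move=> dc cu; have := dM c u; rewrite cu derivation1 dc mul0r add0r => cdu.
by rewrite -[d u]mul1r -cu (mulrC c) -mulrA -cdu mulr0.
Qed.

Lemma iter_scale_derivation f k x :
  d f = 0 -> iter k (fun y => f * d y) x = f ^+ k * iter k d x.
Proof.
move=> df; elim: k x => [|k IH] x /=; first by rewrite expr0 mul1r.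
by rewrite IH derivation_mulkerl ?derivation_expker // exprS mulrA.
Qed.

End Leibniz.

Section Iterates.
Variables (R : comPzRingType) (T : lintop R).

Definition iter_equicontinuous (d : R -> R) : Prop :=
  forall m, exists n, forall k x, fsys T n x -> fsys T m (iter k d x).

Definition iter_cvg0 (d : R -> R) : Prop :=
  forall b m, exists n0, forall k, (n0 <= k)%N -> fsys T m (iter k d b).

Variable d : R -> R.
Hypothesis dD : forall x y, d (x + y) = d x + d y.
Hypothesis dC : hom_continuous T T d.

Lemma iterD k x y : iter k d (x + y) = iter k d x + iter k d y.
Proof. by elim: k => [|k IH] //=; rewrite IH dD. Qed.

Lemma top_integrable_of_iter :
  iter_equicontinuous d -> iter_cvg0 d -> top_integrable T d.
Proof.
move=> equi cvg0 b U' [_ [m U'm]].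
have [n hn] := equi m; have [n0 hn0] := cvg0 b m.
exists (fsys T n), n0; split; first exact: open_fsys.
by move=> k x n0k hx; apply: U'm; rewrite iterD; apply: fsysD; auto.
Qed.

Lemma top_integrable_cvg0 : top_integrable T d -> iter_cvg0 d.
Proof.
move=> dI b m; have [U [n0 [[[U0 _ _] _] hU]]] := dI b _ (open_fsys T m).
by exists n0 => k n0k; have := hU k 0 n0k U0; rewrite addr0.
Qed.

Lemma iter_continuous k m :
  exists n, forall x, fsys T n x -> fsys T m (iter k d x).
Proof.
elim: k m => [|k IH] m; first by exists m.
have [n1 hn1] := IH m; have [n hn] := dC (open_fsys T n1).
by exists n => x hx; rewrite iterSr; apply: hn1; apply: hn.
Qed.

Lemma top_integrable_equicontinuous :
  top_integrable T d -> iter_equicontinuous d.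
Proof.
move=> dI m; have [U [n0 [[_ [n1 hn1]] hU]]] := dI 0 _ (open_fsys T m).
pose small l N := forall x, fsys T N x -> fsys T m (iter l d x).
have [K hK] : exists K, forall l N, (l < n0)%N -> (K <= N)%N -> small l N.
  apply: eventually_forall_lt => l; have [N hN] := iter_continuous l m.
  by exists N => N' NN' x hx; apply: hN; exact: fsys_le NN' hx.
exists (maxn K n1) => k x hx; case: (ltnP k n0) => n0k.
- by apply: (hK k (maxn K n1)) => //; exact: leq_maxl.
- by have := hU k x n0k (hn1 x (fsys_le (leq_maxr _ _) hx)); rewrite add0r.
Qed.

End Iterates.

Lemma top_integrable_scale (R : comPzRingType) (T : lintop R) (d : R -> R) f :
  (forall x y, d (x + y) = d x + d y) ->
  (forall x y, d (x * y) = d x * y + x * d y) ->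
  hom_continuous T T d -> top_integrable T d ->
  d f = 0 -> top_integrable T (fun x => f * d x).
Proof.
move=> dD dM dC dI df.
have equi := top_integrable_equicontinuous dC dI.
have cvg0 := top_integrable_cvg0 dI.
apply: top_integrable_of_iter => [x y|m|b m]; first by rewrite dD mulrDr.
- have [n hn] := equi m; exists n => k x hx.
  by rewrite iter_scale_derivation //; apply/fsysM/hn.
- have [n0 hn0] := cvg0 b m; exists n0 => k n0k.
  by rewrite iter_scale_derivation //; apply/fsysM/hn0.
Qed.

Section Sum.
Variables (R : comPzRingType) (T : lintop R) (d d' : R -> R).
Hypothesis dD : forall x y, d (x + y) = d x + d y.
Hypothesis d'D : forall x y, d' (x + y) = d' x + d' y.
Hypothesis dd' : forall x, d (d' x) = d' (d x).

Lemma iter_add_closed (U : R -> Prop) :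
    (forall x y, U x -> U y -> U (x + y)) ->
  forall n x, (forall k l, (k + l = n)%N -> U (iter k d (iter l d' x))) ->
    U (iter n (fun y => d y + d' y) x).
Proof.
move=> UD.
have iter_d'_d l x : iter l d' (d x) = d (iter l d' x).
  by elim: l x => [|l IH] x //=; rewrite IH dd'.
have sumD x y : d (x + y) + d' (x + y) = (d x + d' x) + (d y + d' y).
  by rewrite dD d'D addrACA.
elim=> [|n IH] x Ux; first exact: (Ux 0%N 0%N).
rewrite iterSr (iterD sumD); apply: UD; apply: IH => k l kl.
- by rewrite iter_d'_d -iterSr; apply: Ux; rewrite addSn kl.
- by rewrite -iterSr; apply: Ux; rewrite addnS kl.
Qed.

Lemma iter_equicontinuous_add :
  iter_equicontinuous T d -> iter_equicontinuous T d' ->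
  iter_equicontinuous T (fun x => d x + d' x).
Proof.
move=> equi equi' m; have [n1 hn1] := equi m; have [n2 hn2] := equi' n1.
exists n2 => n x hx; apply: iter_add_closed; first exact: fsysD.
by move=> k l _; apply/hn1/hn2.
Qed.

Lemma iter_cvg0_add :
  iter_equicontinuous T d -> iter_cvg0 T d -> iter_cvg0 T d' ->
  iter_cvg0 T (fun x => d x + d' x).
Proof.
move=> equi cvg0 cvg0' b m; have [n1 hn1] := equi m.
have [M hM] := cvg0' b n1.
have [K hK] := eventually_forall_lt (fun l => cvg0 (iter l d' b) m) M.
exists (K + M)%N => n KMn; apply: iter_add_closed; first exact: fsysD.
move=> k l kl; case: (ltnP l M) => lM; first by apply: hK => //; lia.
by apply/hn1/hM.
Qed.

Lemma top_integrable_add :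
  hom_continuous T T d -> hom_continuous T T d' ->
  top_integrable T d -> top_integrable T d' ->
  top_integrable T (fun x => d x + d' x).
Proof.
move=> dC d'C dI d'I.
have equi := top_integrable_equicontinuous dC dI.
have equi' := top_integrable_equicontinuous d'C d'I.
apply: top_integrable_of_iter => [x y||]; first by rewrite dD d'D addrACA.
- exact: iter_equicontinuous_add.
- exact: iter_cvg0_add (top_integrable_cvg0 dI) (top_integrable_cvg0 d'I).
Qed.

End Sum.

Section Image.
Variables (B C : comPzRingType) (TB : lintop B) (TC : lintop C).
Variables (pi : B -> C) (d : B -> B) (db : C -> C).
Hypothesis piD : {morph pi : x y / x + y}.
Hypothesis piC : hom_continuous TB TC pi.
Hypothesis piO : hom_open TB TC pi.
Hypothesis piS : forall c, exists b, pi b = c.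
Hypothesis dbpi : forall b, db (pi b) = pi (d b).

Lemma iter_image k b : iter k db (pi b) = pi (iter k d b).
Proof. by elim: k b => [|k IH] b //=; rewrite IH dbpi. Qed.

Lemma iter_equicontinuous_image :
  iter_equicontinuous TB d -> iter_equicontinuous TC db.
Proof.
move=> equi m; have [p hp] := piC (open_fsys TC m).
have [n hn] := equi p; have [q hq] := piO (open_fsys TB n).
exists q => k c hc; have [x [hx <-]] := hq c hc.
by rewrite iter_image; apply/hp/hn.
Qed.

Lemma iter_cvg0_image : iter_cvg0 TB d -> iter_cvg0 TC db.
Proof.
move=> cvg0 c m; have [b <-] := piS c; have [p hp] := piC (open_fsys TC m).
have [n0 hn0] := cvg0 b p; exists n0 => k n0k.
by rewrite iter_image; apply/hp/hn0.
Qed.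

Lemma top_integrable_image :
  (forall x y, d (x + y) = d x + d y) -> hom_continuous TB TB d ->
  top_integrable TB d -> top_integrable TC db.
Proof.
move=> dD dC dI; apply: top_integrable_of_iter.
- move=> c1 c2; have [b1 <-] := piS c1; have [b2 <-] := piS c2.
  by rewrite -piD !dbpi dD piD.
- exact/iter_equicontinuous_image/(top_integrable_equicontinuous dC dI).
- exact/iter_cvg0_image/(top_integrable_cvg0 dI).
Qed.

End Image.

Section Localization.
Variables (B D : comPzRingType) (TB : lintop B) (TD : lintop D).
Variables (S : B -> Prop) (j : {rmorphism B -> D}) (d : B -> B) (dh : D -> D).
Hypothesis dM : forall x y, d (x * y) = d x * y + x * d y.
Hypothesis S1 : S 1.
Hypothesis kerS : forall s, S s -> d s = 0.
Hypothesis locS : loc_completion TB S TD j.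
Hypothesis dhD : forall x y, dh (x + y) = dh x + dh y.
Hypothesis dhM : forall x y, dh (x * y) = dh x * y + x * dh y.
Hypothesis dhj : forall b, dh (j b) = j (d b).

Lemma iter_fraction k b s u :
  S s -> j s * u = 1 -> iter k dh (j b * u) = j (iter k d b) * u.
Proof.
move=> Ss su; have dhu : dh u = 0.
  by apply: (derivation_invker dhM _ su); rewrite dhj kerS ?rmorph0.
by elim: k => [|k IH] //=; rewrite IH dhM dhj dhu mulr0 addr0.
Qed.

Lemma fsys_fraction n b s u : S s -> j s * u = 1 ->
  fsys TD n (j b * u) <-> exists t, S t /\ fsys TB n (t * b).
Proof. by case: locS => _ _ fsysS _; apply: fsysS. Qed.

Lemma iter_equicontinuous_loc :
  hom_continuous TD TD dh ->
  iter_equicontinuous TB d -> iter_equicontinuous TD dh.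
Proof.
move=> dhC equi m; have [p hp] := equi m; exists p => k z hz.
have [q hq] := iter_continuous dhC k m.
case: locS => _ _ _ /(_ z (maxn p q)) [b [s [u [Ss su approx]]]].
have -> : z = j b * u + (z - j b * u) by rewrite addrC subrK.
rewrite (iterD dhD); apply: fsysD; last by apply: hq; exact: fsys_le (leq_maxr _ _) approx.
have : fsys TD p (j b * u).
  have -> : j b * u = z - (z - j b * u) by rewrite opprB addrC subrK.
  by apply: fsysB hz _; exact: fsys_le (leq_maxl _ _) approx.
case/(fsys_fraction _ _ Ss su) => t [St tb].
rewrite (iter_fraction _ _ Ss su); apply/(fsys_fraction _ _ Ss su); exists t.
by rewrite -iter_mulkerl ?kerS //; split => //; apply: hp.
Qed.

Lemma iter_cvg0_loc :
  iter_equicontinuous TD dh -> iter_cvg0 TB d -> iter_cvg0 TD dh.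
Proof.
move=> equi cvg0 y m; have [n hn] := equi m.
case: locS => _ _ _ /(_ y n) [b [s [u [Ss su approx]]]].
have [n0 hn0] := cvg0 b m; exists n0 => k n0k.
have -> : y = j b * u + (y - j b * u) by rewrite addrC subrK.
rewrite (iterD dhD); apply: fsysD; last exact: hn.
rewrite (iter_fraction _ _ Ss su); apply/(fsys_fraction _ _ Ss su).
by exists 1; rewrite mul1r; split => //; apply: hn0.
Qed.

Lemma top_integrable_loc :
  (forall x y, d (x + y) = d x + d y) -> hom_continuous TB TB d ->
  hom_continuous TD TD dh -> top_integrable TB d -> top_integrable TD dh.
Proof.
move=> dD dC dhC dI.
have equi := iter_equicontinuous_loc dhC (top_integrable_equicontinuous dC dI).
exact: top_integrable_of_iter dhD equi (iter_cvg0_loc equi (top_integrable_cvg0 dI)).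
Qed.

End Localization.

Theorem proposition2p28
  (A : comNzRingType) (TA : lintop A)
  (B : comPzRingType) (TB : lintop B)
  (phi : {rmorphism A -> B})
  (d : B -> B) :
  (forall n : nat, exists u : A, (n.+1)%:R * u = 1) ->
  hom_continuous TA TB phi ->
  complete TB ->
  derivation phi TB d ->
  top_integrable TB d ->
  [/\ (* (a) *)
      (forall f : B, d f = 0 -> top_integrable TB (fun x => f * d x)),
      (* (b) *)
      (forall (S : B -> Prop), mult_closed S -> (forall s, S s -> d s = 0) ->
       forall (D : comPzRingType) (TD : lintop D) (j : {rmorphism B -> D}),
         loc_completion TB S TD j ->
         forall dh : D -> D, derivation (fun a => j (phi a)) TD dh ->
           (forall b, dh (j b) = j (d b)) ->
           top_integrable TD dh),
      (* (c) *)
      (forall (C : comPzRingType) (TC : lintop C) (pi : {rmorphism B -> C}),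
         complete TC -> hom_continuous TB TC pi -> hom_open TB TC pi ->
         (forall c, exists b, pi b = c) ->
         (forall b, pi b = 0 -> pi (d b) = 0) ->
         forall db : C -> C, (forall b, db (pi b) = pi (d b)) ->
           top_integrable TC db)
    & (* (d) *)
      (forall d' : B -> B, derivation phi TB d' -> top_integrable TB d' ->
         (forall x, d (d' x) = d' (d x)) ->
         top_integrable TB (fun x => d x + d' x))].
Proof.
move=> _ _ _ [dD dM _ dC] dI; split.
- by move=> f; apply: top_integrable_scale.
- move=> S [S1 _] kerS D TD j locS dh [dhD dhM _ dhC] dhj.
  exact: top_integrable_loc locS dhD dhM dhj dD dC dhC dI.
- move=> C TC pi _ piC piO piS _ db dbpi.
  exact: top_integrable_image (rmorphD pi) piC piO piS dbpi dD dC dI.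
- move=> d' [d'D _ _ d'C] d'I dd'.
  exact: top_integrable_add dD d'D dd' dC d'C dI d'I.
Qed.
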